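(* Let $i,j,k,s$ be distinct jobs such that $(i,k)$, $(j,k)$, $(s,i)$ and $(s,j)$ are all red pairs. Then, in the schedule produced by $1$-SORT, $D(i,j)\le\left(1+\frac{1}{\nu(\mu+1)}\right)D^*(i,j)$.
   Context: Setting: single machine, jobs $J=\{1,\dots,n\}$, each job $j$ with test time $t_j\ge0$ and processing time $p_j\ge0$ (revealed only when the test is executed); each job's test must be executed before its processing part, which may start any time after the test; operations are non-preemptive and the machine does one at a time. $\sigma_j=t_j+p_j$, $m_j=\max\{t_j,p_j\}$. Standing assumption (general position): no two of the $3n$ numbers $t_j,p_j,\sigma_j$ are equal. Algorithm $1$-SORT: keep a priority queue of available operations, initially the test of every job $j$ with priority $t_j$; repeatedly remove a minimum-priority operation and execute it immediately; after executing the test of $j$, insert the processing part of $j$ with priority $p_j$. For distinct jobs $j,k$, let $d_{k,j}$ be the total amount of time during which operations of $k$ are executed before the completion time of $j$, and $D(j,k)=d_{j,k}+d_{k,j}$, evaluated for the $1$-SORT schedule; $D^*(j,k)=\min\{\sigma_j,\sigma_k\}$. Fix constants $\mu>1$ and $0<\nu<1$ with $\mu\nu>1$ and $1+\frac1\mu\le\nu+\nu^2$. A job $j$ is imbalanced if $m_j\ge\mu\min\{t_j,p_j\}$. For distinct jobs $j,k$, the ordered pair $(j,k)$ is a red pair if $j$ is imbalanced, $m_j\ge t_k\ge\nu m_j$, and $p_k\ge\nu t_k$. *)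

From mathcomp Require Import all_boot all_order all_algebra.
Set Implicit Arguments. Unset Strict Implicit. Unset Printing Implicit Defensive.
Import Order.TTheory GRing.Theory Num.Theory.
Local Open Scope ring_scope.

Section OneSort.
Variables (R : realFieldType) (n : nat) (t p : 'I_n -> R).

Definition sigma (j : 'I_n) : R := t j + p j.
Definition mj (j : 'I_n) : R := Num.max (t j) (p j).

(* An operation: (j, false) is the test of j, (j, true) its processing part. *)
Definition op := ('I_n * bool)%type.
Definition olen (o : op) : R := if o.2 then p o.1 else t o.1.
Definition prio (o : op) : R := olen o.

(* minimum-priority element of a :: s (first one in case of ties,
   which cannot occur under general position) *)
Definition pickmin (a : op) (s : seq op) : op :=
  foldl (fun b y => if prio y < prio b then y else b) a s.

Fixpoint sort1 (fuel : nat) (avail : seq op) : seq op :=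
  match fuel with
  | 0%N => [::]
  | fuel'.+1 =>
    match avail with
    | [::] => [::]
    | a :: rest =>
      let m := pickmin a rest in
      m :: sort1 fuel' (rem m avail ++ (if m.2 then [::] else [:: (m.1, true)]))
    end
  end.

(* the 1-SORT schedule: the sequence of operations in execution order
   (executed back to back from time 0, no idle time) *)
Definition schedule : seq op :=
  sort1 (2 * n) [seq (j, false) | j <- enum 'I_n].

(* d_{k,j}: total time during which operations of k are executed before the
   completion time of j (= completion of the processing part of j). *)
Definition dd (k j : 'I_n) : R :=
  \sum_(o <- take (index (j, true) schedule).+1 schedule | o.1 == k) olen o.

Definition DD (j k : 'I_n) : R := dd j k + dd k j.
Definition Dstar (j k : 'I_n) : R := Num.min (sigma j) (sigma k).

(* general position: the 3n numbers t_j, p_j, sigma_j are pairwise distinct *)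
Definition val3 (j : 'I_n) (a : 'I_3) : R :=
  if val a == 0%N then t j else if val a == 1%N then p j else sigma j.
Definition general_position : Prop :=
  forall (j k : 'I_n) (a b : 'I_3), (j, a) != (k, b) -> val3 j a != val3 k b.

Variables (mu nu : R).
Definition imbalanced (j : 'I_n) : Prop :=
  mu * Num.min (t j) (p j) <= mj j.
Definition red_pair (j k : 'I_n) : Prop :=
  [/\ j != k, imbalanced j, nu * mj j <= t k, t k <= mj j & nu * t k <= p k].

End OneSort.

(* Both i and j are imbalanced with a long processing part (mu t <= p), and
   their tests are within a factor nu of each other, both lying in
   [nu m_s, m_s].  If p_i < p_j, 1-SORT runs the test and then the processing
   part of i before the processing part of j, so D(i,j) <= sigma_i + t_j.
   Since t_j <= sigma_i / (nu (mu + 1)) and t_i <= sigma_j / (nu (mu + 1)),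
   and p_i < p_j, this is at most (1 + 1/(nu (mu + 1))) min(sigma_i, sigma_j). *)
From mathcomp Require Import all_boot all_order all_algebra.
From mathcomp Require Import zify lra.
Set Implicit Arguments. Unset Strict Implicit. Unset Printing Implicit Defensive.
Import Order.TTheory GRing.Theory Num.Theory.
Local Open Scope ring_scope.

Section OneSortSchedule.
Variables (R : realFieldType) (n : nat) (t p : 'I_n -> R).
Local Notation prio := (prio t p).
Local Notation pickmin := (pickmin t p).
Local Notation sort1 := (sort1 t p).

Lemma pickmin_cons a y s :
  pickmin a (y :: s) = pickmin (if prio y < prio a then y else a) s.
Proof. by []. Qed.

Lemma pickmin_mem a s : pickmin a s \in a :: s.
Proof.
elim: s a => [|y s IH] a; first by rewrite inE.
rewrite pickmin_cons; have := IH (if prio y < prio a then y else a).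
by rewrite !inE => /orP [/eqP->|->]; [case: ifP; rewrite eqxx ?orbT | rewrite !orbT].
Qed.

Lemma pickmin_min a s z : z \in a :: s -> prio (pickmin a s) <= prio z.
Proof.
elim: s a z => [|y s IH] a z; first by rewrite inE => /eqP ->.
rewrite pickmin_cons; set b := if _ then _ else _.
have [ba by_] : prio b <= prio a /\ prio b <= prio y.
  by rewrite /b; case: ltP => [/ltW|] ya; split.
rewrite !inE => /or3P [/eqP ->|/eqP ->|zs]; last by rewrite IH // inE zs orbT.
- exact: le_trans (IH b b (mem_head _ _)) ba.
- exact: le_trans (IH b b (mem_head _ _)) by_.
Qed.

Definition release (o : op n) : seq (op n) :=
  if o.2 then [::] else [:: (o.1, true)].

Lemma mem_release x o : x \in release o = ~~ o.2 && (x == (o.1, true)).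
Proof. by rewrite /release; case: (o.2); rewrite ?inE. Qed.

Lemma sort1_cons f a s : let m := pickmin a s in
  sort1 f.+1 (a :: s) = m :: sort1 f (rem m (a :: s) ++ release m).
Proof. by []. Qed.

(* The second alternative keeps the statement inductive: once that test has
   run, the processing part [x] becomes available. *)
Lemma sort1_before f avail (x y : op n) :
  (x \in avail \/ [/\ x.2, (x.1, false) \in avail & t x.1 < prio y]) ->
  prio x < prio y -> y \in sort1 f avail ->
  x \in take (index y (sort1 f avail)) (sort1 f avail).
Proof.
elim: f avail => [|f IH] [|a s] // x_av xy; rewrite sort1_cons.
set m := pickmin a s; set r := rem m (a :: s).
have my : prio m < prio y.
  case: x_av => [x_av|[_ x_av tx]]; last exact: le_lt_trans (pickmin_min x_av) tx.
  exact: le_lt_trans (pickmin_min x_av) xy.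
have my' : m != y by apply: contraTneq my => ->; rewrite ltxx.
rewrite in_cons eq_sym (negbTE my') /= (negbTE my') in_cons => y_sch.
have [//|xm] := eqVneq x m; apply: IH => //.
case: x_av => [x_av|[x2 x_av tx]]; first by left; rewrite mem_cat (rem_mem xm).
have [tm|] := eqVneq (x.1, false) m; last by right; rewrite mem_cat (rem_mem _ x_av).
by left; rewrite mem_cat mem_release -tm /= -x2 -surjective_pairing eqxx orbT.
Qed.

(* A pending test also owes its processing part, so it counts twice. *)
Definition work (avail : seq (op n)) : nat :=
  \sum_(o <- avail) (if o.2 then 1 else 2)%N.

Lemma work_step a s :
  (work (rem (pickmin a s) (a :: s) ++ release (pickmin a s)) < work (a :: s))%N.
Proof.
set m := pickmin a s.
rewrite /work big_cat (perm_big _ (perm_to_rem (pickmin_mem a s))) -/m big_cons.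
set w := \sum_(o <- rem m _) _.
by rewrite /release; case: (m.2); rewrite ?big_nil ?big_seq1 /=; lia.
Qed.

Lemma sort1_complete f avail x : (work avail <= f)%N -> x \in avail ->
  x \in sort1 f avail /\ (~~ x.2 -> (x.1, true) \in sort1 f avail).
Proof.
elim: f avail x => [|f IH] [|a s] x //; first by rewrite /work big_cons; case: (a.2).
rewrite sort1_cons; set m := pickmin a s => work_f x_av.
have {}work_f := leq_trans (work_step a s) work_f; rewrite ltnS in work_f.
have [xm|xm] := eqVneq x m.
  split; first by rewrite xm mem_head.
  move=> x1; apply/orP; right; apply: (proj1 (IH _ _ work_f _)).
  by rewrite mem_cat mem_release -/m -xm x1 eqxx orbT.
have x_av' : x \in rem m (a :: s) ++ release m by rewrite mem_cat (rem_mem xm).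
have [x_sch x2_sch] := IH _ x work_f x_av'.
by split=> [|/x2_sch x2]; rewrite in_cons ?x_sch ?x2 orbT.
Qed.

Lemma mem_sort1 f avail y : y \in sort1 f avail ->
  y \in avail \/ y.2 /\ (y.1, false) \in avail.
Proof.
elim: f avail => [|f IH] [|a s] //; rewrite sort1_cons; set m := pickmin a s.
rewrite in_cons => /predU1P [->|/IH]; first by left; apply: pickmin_mem.
rewrite !mem_cat !mem_release xpair_eqE !andbF orbF.
have r_av : {subset rem m (a :: s) <= a :: s} := @mem_rem _ m _.
case=> [/orP [/r_av|/andP [m2 /eqP ->]]|[y2 /r_av]]; [by left | | by right].
by right; split=> //=; rewrite -(negbTE m2) -surjective_pairing pickmin_mem.
Qed.

Definition wf_avail (avail : seq (op n)) : Prop :=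
  uniq avail /\ forall c, (c, false) \in avail -> (c, true) \notin avail.

Lemma wf_avail_step a s : let m := pickmin a s in
  wf_avail (a :: s) -> wf_avail (rem m (a :: s) ++ release m).
Proof.
move=> m [av_uniq av_wf]; have m_av : m \in a :: s := pickmin_mem a s.
have mE : m = (m.1, m.2) := surjective_pairing m.
have r_uniq := rem_uniq m av_uniq; have r_mem := mem_rem_uniq m av_uniq.
set r := rem m (a :: s) in r_uniq r_mem *.
split.
  rewrite cat_uniq r_uniq /release; case: ifP => // m2.
  rewrite /= orbF andbT r_mem; apply/nandP; right.
  by apply: av_wf; rewrite -m2 -mE.
move=> c; rewrite !mem_cat !mem_release xpair_eqE !andbF orbF !r_mem !in_simpl.
move=> /andP [cm c_av]; rewrite negb_or (negPf (av_wf c c_av)) andbF /=.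
by apply: contra cm => /andP [m2 /eqP [->]]; rewrite [in X in _ == X]mE (negbTE m2).
Qed.

Lemma sort1_uniq f avail : wf_avail avail -> uniq (sort1 f avail).
Proof.
elim: f avail => [|f IH] [|a s] // av_wf; rewrite sort1_cons cons_uniq.
set m := pickmin a s; have next_wf := wf_avail_step av_wf.
rewrite IH // andbT; apply/negP => /mem_sort1.
have [av_uniq av_disj] := av_wf; have m_av : m \in a :: s := pickmin_mem a s.
have r_av : {subset rem m (a :: s) <= a :: s} := @mem_rem _ m _.
rewrite !mem_cat mem_rem_uniqF // !mem_release xpair_eqE !andbF !orbF.
case=> [/andP [m2 /eqP mE]|[m2 /r_av m1_av]]; first by rewrite mE in m2.
by have := av_disj _ m1_av; rewrite -m2 -surjective_pairing m_av.
Qed.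

Lemma big_job_ops (P : seq (op n)) c : uniq P ->
  \sum_(o <- P | o.1 == c) olen t p o =
  (if (c, false) \in P then t c else 0) + (if (c, true) \in P then p c else 0).
Proof.
move=> P_uniq; rewrite -big_filter.
rewrite (perm_big [seq o <- [:: (c, false); (c, true)] | o \in P]); last first.
  apply: uniq_perm; rewrite ?filter_uniq //; first by rewrite /= inE xpair_eqE eqxx.
  move=> [d b]; rewrite !mem_filter !inE /= !xpair_eqE.
  by case: b; case: (d =P c) => [->|]; rewrite ?andbT ?andbF ?orbF.
by rewrite /=; do 2!case: ifP => _; rewrite ?big_cons ?big_nil /olen /= ?addr0 ?add0r.
Qed.

Let avail0 := [seq (j, false) | j <- enum 'I_n].

Lemma wf_avail0 : wf_avail avail0.
Proof.
split; first by rewrite map_inj_uniq ?enum_uniq // => a b [].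
by move=> c _; apply/mapP => -[].
Qed.

Lemma schedule_uniq : uniq (schedule t p).
Proof. exact: sort1_uniq wf_avail0. Qed.

Lemma mem_schedule c : (c, true) \in schedule t p.
Proof.
have c_av : (c, false) \in avail0 by apply: map_f; rewrite mem_enum.
have work_avail0 : (work avail0 <= 2 * n)%N.
  by rewrite /work big_map big_enum sum_nat_const card_ord mulnC.
exact: (sort1_complete work_avail0 c_av).2.
Qed.

Lemma schedule_before i j : t i <= p i -> p i < p j ->
  (i, true) \in take (index (j, true) (schedule t p)) (schedule t p).
Proof.
move=> tpi pij; apply: sort1_before (mem_schedule j) => //; right.
by split=> //=; [apply: map_f; rewrite mem_enum | apply: le_lt_trans pij].
Qed.

Lemma DD_le_sigma_test i j : 0 <= t i -> 0 <= p i -> 0 <= t j ->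
  t i <= p i -> p i < p j -> DD t p i j <= t i + p i + t j.
Proof.
move=> ti0 pi0 tj0 tpi pij; have sch_uniq := schedule_uniq.
have ij_index := index_ltn (schedule_before tpi pij).
have j_late : (j, true) \notin
    take (index (i, true) (schedule t p)).+1 (schedule t p).
  by rewrite in_take ?mem_schedule // ltnS -ltnNge.
rewrite /DD /dd !big_job_ops ?take_uniq // (negbTE j_late) addr0.
by apply: lerD; [apply: lerD | ]; case: ifP.
Qed.

End OneSortSchedule.

Lemma general_position_neq_p (R : realFieldType) n (t p : 'I_n -> R) i j :
  general_position t p -> i != j -> p i != p j.
Proof.
move=> gp ij; pose one : 'I_3 := @Ordinal 3 1 isT.
by apply: (gp i j one one); rewrite xpair_eqE negb_and ij.
Qed.

Section RedPairs.
Variables (R : realFieldType) (n : nat) (t p : 'I_n -> R) (mu nu : R).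

Lemma imbalanced_test_small j : 0 <= p j -> 1 < mu -> 1 < mu * nu ->
  imbalanced t p mu j -> nu * t j <= p j -> mu * t j <= p j.
Proof.
move=> p0 mu_gt1 munu_gt1; rewrite /imbalanced /mj.
case: (lerP (t j) (p j)) => [_ _ _ //|pt mup nutp].
have grow : t j < mu * (nu * t j) by rewrite mulrA ltr_pMl // (le_lt_trans p0).
have shrink : mu * (nu * t j) <= t j.
  by apply: le_trans mup; rewrite ler_pM2l ?(lt_trans ltr01).
by have := lt_le_trans grow shrink; rewrite ltxx.
Qed.

Lemma red_pairs_tests_close i j s : 0 <= nu ->
  red_pair t p mu nu s i -> red_pair t p mu nu s j -> nu * t j <= t i.
Proof.
move=> nu_ge0 [_ _ si _ _] [_ _ _ sj _]; apply: le_trans si.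
by rewrite ler_wpM2l.
Qed.

Local Notation c := (nu * (mu + 1))^-1.

Lemma le_scaled_sum a b x : 0 <= mu -> 0 < nu ->
  nu * x <= a -> mu * a <= b -> x <= c * (a + b).
Proof.
move=> mu_ge0 nu_gt0 nux mua.
have k_gt0 : 0 < nu * (mu + 1) by apply: mulr_gt0; lra.
rewrite [_ * (a + b)]mulrC ler_pdivlMr //.
have : nu * x * (mu + 1) <= a * (mu + 1) by rewrite ler_wpM2r //; lra.
nra.
Qed.

Lemma DD_le_ordered i j : (forall k, 0 <= t k) -> (forall k, 0 <= p k) ->
  1 < mu -> 0 < nu ->
  mu * t i <= p i -> mu * t j <= p j -> nu * t i <= t j -> nu * t j <= t i ->
  p i < p j -> DD t p i j <= (1 + c) * Dstar t p i j.
Proof.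
move=> t_ge0 p_ge0 mu_gt1 nu_gt0 mui muj nuij nuji pij.
have mu_ge0 : 0 <= mu by lra.
have tpi : t i <= p i by apply: le_trans mui; rewrite ler_peMl // ltW.
have D_le := DD_le_sigma_test (t_ge0 i) (p_ge0 i) (t_ge0 j) tpi pij.
have tj_share : t j <= c * sigma t p i := le_scaled_sum mu_ge0 nu_gt0 nuji mui.
have ti_share : t i <= c * sigma t p j := le_scaled_sum mu_ge0 nu_gt0 nuij muj.
rewrite /Dstar mulrDl mul1r; move: D_le tj_share ti_share; rewrite /sigma.
by case: (lerP (t i + p i) (t j + p j)) => _; lra.
Qed.

End RedPairs.

Theorem mainTheorem10 (R : realFieldType) (n : nat) (t p : 'I_n -> R)
  (mu nu : R) :
  (forall j, 0 <= t j) -> (forall j, 0 <= p j) ->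
  general_position t p ->
  1 < mu -> 0 < nu -> nu < 1 -> 1 < mu * nu ->
  1 + mu^-1 <= nu + nu ^+ 2 ->
  forall i j k s : 'I_n,
    uniq [:: i; j; k; s] ->
    red_pair t p mu nu i k -> red_pair t p mu nu j k ->
    red_pair t p mu nu s i -> red_pair t p mu nu s j ->
    DD t p i j <= (1 + (nu * (mu + 1))^-1) * Dstar t p i j.
Proof.
move=> t_ge0 p_ge0 gp mu_gt1 nu_gt0 _ munu_gt1 _ i j k s ijks
  [_ imb_i _ _ _] [_ imb_j _ _ _] si sj.
have ij : i != j by move: ijks; rewrite /= !inE !negb_or => /and4P [/and3P []].
have [_ _ _ _ nu_pi] := si; have [_ _ _ _ nu_pj] := sj.
have mui := imbalanced_test_small (p_ge0 i) mu_gt1 munu_gt1 imb_i nu_pi.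
have muj := imbalanced_test_small (p_ge0 j) mu_gt1 munu_gt1 imb_j nu_pj.
have nuij := red_pairs_tests_close (ltW nu_gt0) sj si.
have nuji := red_pairs_tests_close (ltW nu_gt0) si sj.
case: (ltgtP (p i) (p j)) => [pij|pji|pij].
- exact: DD_le_ordered.
- by rewrite /DD /Dstar addrC minC; apply: DD_le_ordered.
- by have := general_position_neq_p gp ij; rewrite pij eqxx.
Qed.
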